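(* Let $\mathcal{B}$ be a $\sigma$-algebra on a nonempty set $E$. Every optimal measure on $\mathcal{B}$ is essential, and hence $\sigma$-principal, CCC and autocontinuous.
   Context: An optimal measure is a map $\nu:\mathcal{B}\to[0,\infty]$ with $\nu(\emptyset)=0$, $\nu(B\cup B')=\max(\nu(B),\nu(B'))$, continuous from below ($\nu(\bigcup_nB_n)=\lim_n\nu(B_n)$ for nondecreasing sequences in $\mathcal{B}$) and from above ($\nu(\bigcap_nB_n)=\lim_n\nu(B_n)$ for nonincreasing sequences in $\mathcal{B}$). $\nu$ is essential if there is a $\sigma$-finite $\sigma$-additive measure $m$ on $\mathcal{B}$ with $\nu(B)>0\iff m(B)>0$ for all $B\in\mathcal{B}$. A set $N\subset E$ is $\nu$-negligible if $N\subset G$ for some $G\in\mathcal{B}$ with $\nu(G)=0$. A $\sigma$-ideal of $\mathcal{B}$ is a nonempty $\mathcal{I}\subset\mathcal{B}$ closed under countable unions and under taking subsets belonging to $\mathcal{B}$; $\nu$ is $\sigma$-principal if for each $\sigma$-ideal $\mathcal{I}$ there is $L\in\mathcal{I}$ with $S\setminus L$ $\nu$-negligible for all $S\in\mathcal{I}$. $\nu$ is CCC if every family of pairwise disjoint non-$\nu$-negligible elements of $\mathcal{B}$ is countable. $\nu$ is autocontinuous if there is $f:E\to[0,\infty]$ with $\{f>t\}\in\mathcal{B}$ for all $t\ge0$ and $\nu(B)=\inf\{t>0:B\cap\{f>t\}\text{ is }\nu\text{-negligible}\}$ for all $B\in\mathcal{B}$. *)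

From HB Require Import structures.
From mathcomp Require Import all_boot all_order all_algebra.
From mathcomp Require Import all_classical all_reals all_analysis.
Set Implicit Arguments. Unset Strict Implicit. Unset Printing Implicit Defensive.
Import Order.TTheory GRing.Theory Num.Theory.
Local Open Scope classical_set_scope.
Local Open Scope ring_scope.
Local Open Scope ereal_scope.

Section OptimalMeasures.
Context {d : measure_display} {T : measurableType d} {R : realType}.
Implicit Types (nu : set T -> \bar R).

Definition optimal_measure nu : Prop :=
  [/\ nu set0 = 0,
      (forall A, measurable A -> 0 <= nu A),
      (forall A B, measurable A -> measurable B ->
         nu (A `|` B) = maxe (nu A) (nu B)),
      (forall F : nat -> set T, (forall n, measurable (F n)) ->
         {homo F : n m / (n <= m)%N >-> n `<=` m} ->
         (nu \o F) @ \oo --> nu (\bigcup_n F n)) &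
      (forall F : nat -> set T, (forall n, measurable (F n)) ->
         {homo F : n m / (n <= m)%N >-> m `<=` n} ->
         (nu \o F) @ \oo --> nu (\bigcap_n F n))].

Definition nu_negligible nu (N : set T) : Prop :=
  exists G, [/\ measurable G, N `<=` G & nu G = 0].

Definition essential nu : Prop :=
  exists m : {measure set T -> \bar R},
    sigma_finite [set: T] m /\
    (forall B, measurable B -> (0 < nu B <-> 0 < m B)).

Definition sigma_ideal (I : set (set T)) : Prop :=
  [/\ I !=set0,
      I `<=` measurable,
      (forall F : nat -> set T, (forall n, I (F n)) -> I (\bigcup_n F n)) &
      (forall A B, I A -> measurable B -> B `<=` A -> I B)].

Definition sigma_principal nu : Prop :=
  forall I, sigma_ideal I ->
    exists2 L, I L & forall S, I S -> nu_negligible nu (S `\` L).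

Definition CCC nu : Prop :=
  forall F : set (set T),
    F `<=` measurable ->
    (forall A, F A -> ~ nu_negligible nu A) ->
    (forall A B, F A -> F B -> A <> B -> A `&` B = set0) ->
    countable F.

Definition autocontinuous nu : Prop :=
  exists f : T -> \bar R,
    [/\ (forall x, 0 <= f x),
        (forall t : R, (0 <= t)%R -> measurable [set x | t%:E < f x]) &
        (forall B, measurable B ->
           nu B = ereal_inf [set t%:E | t in
             [set t : R | (0 < t)%R /\
                nu_negligible nu (B `&` [set x | t%:E < f x])]])].

End OptimalMeasures.

From HB Require Import structures.
From mathcomp Require Import all_boot all_order all_algebra.
From mathcomp Require Import all_classical all_reals all_analysis.
From mathcomp Require Import finmap zify.
Set Implicit Arguments. Unset Strict Implicit. Unset Printing Implicit Defensive.
Import Order.TTheory GRing.Theory Num.Theory.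
Local Open Scope classical_set_scope.
Local Open Scope ring_scope.
Local Open Scope ereal_scope.

(* For e > 0, an optimal measure admits no infinite sequence of disjoint
   measurable sets of nu-value > e: their tails decrease to the empty set, so
   continuity from above would give 0 >= e.  Splitting a family of such sets
   along a measurable C, maxitivity leaves each member large on one side of C,
   so arbitrarily large families persist on C or on its complement; iterating
   this yields an infinite disjoint sequence.  Hence the packing number N_k(X),
   the largest number of disjoint measurable subsets of X with nu > 1/(k+1),
   is bounded.  Maxitivity makes N_k additive on disjoint sets and continuity
   from below makes it sigma-additive, so
     m = sum_k 2^-(k+1) N_k / (N_k(E) + 1)
   is a finite measure with the same null sets as nu.  sigma-principality and
   the CCC follow by maximising, resp. bounding, the integer-valued N_k.  For
   autocontinuity, take W_q principal in the sigma-ideal {nu <= q} for every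
   rational q > 0; then f(x) = inf {q | x in W_q} works. *)

Section optimal_measure.
Context d (T : measurableType d) (R : realType) (nu : set T -> \bar R).
Hypothesis nu_opt : optimal_measure nu.

Lemma nu0 : nu set0 = 0. Proof. by case: nu_opt. Qed.

Lemma nu_ge0 A : measurable A -> 0 <= nu A.
Proof. by case: nu_opt => _ + _ _ _; apply. Qed.

Lemma nuU A B : measurable A -> measurable B ->
  nu (A `|` B) = maxe (nu A) (nu B).
Proof. by case: nu_opt => _ _ + _ _; apply. Qed.

Lemma nondecreasing_cvg_nu (F : nat -> set T) : (forall n, measurable (F n)) ->
  {homo F : n m / (n <= m)%N >-> n `<=` m} ->
  (nu \o F) @ \oo --> nu (\bigcup_n F n).
Proof. by case: nu_opt => _ _ _ + _; apply. Qed.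

Lemma nonincreasing_cvg_nu (F : nat -> set T) : (forall n, measurable (F n)) ->
  {homo F : n m / (n <= m)%N >-> m `<=` n} ->
  (nu \o F) @ \oo --> nu (\bigcap_n F n).
Proof. by case: nu_opt => _ _ _ _; apply. Qed.

Lemma le_nu A B : measurable A -> measurable B -> A `<=` B -> nu A <= nu B.
Proof. by move=> mA mB AB; rewrite -((setUidPr A B).2 AB) nuU // le_max lexx. Qed.

Lemma nu_negligibleE A : measurable A -> nu_negligible nu A <-> nu A = 0.
Proof.
move=> mA; split => [[G [mG AG G0]]|A0]; last by exists A; split.
by apply/eqP; rewrite eq_le nu_ge0 // andbT -G0 le_nu.
Qed.

Lemma nu_bigcupT_le (F : nat -> set T) c : (forall n, measurable (F n)) ->
  (forall n, nu (F n) <= c) -> nu (\bigcup_n F n) <= c.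
Proof.
move=> mF Fc; pose G n := \big[setU/set0]_(i < n.+1) F i.
have mG n : measurable (G n) by exact: bigsetU_measurable.
have Gc n : nu (G n) <= c.
  elim: n => [|n ih]; first by rewrite /G big_ord1.
  rewrite /G big_ord_recr /= nuU //; last exact: bigsetU_measurable.
  by rewrite ge_max Fc andbT.
rewrite -bigcup_bigsetU_bigcup.
apply: (cvge_to_le (nondecreasing_cvg_nu mG _)); last exact: nearW.
move=> n m nm; rewrite /G -!bigcup_mkord => x [i /= im Fix].
by exists i => //=; exact: leq_trans nm.
Qed.

Lemma nu_bigcup_le (I : countType) (D : set I) (F : I -> set T) c : 0 <= c ->
  (forall i, D i -> measurable (F i)) -> (forall i, D i -> nu (F i) <= c) ->
  nu (\bigcup_(i in D) F i) <= c.
Proof.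
move=> c0 mF Fc.
pose G n := if pickle_inv n is Some i then (if `[< D i >] then F i else set0)
            else set0.
have -> : \bigcup_(i in D) F i = \bigcup_n G n.
  apply/seteqP; split => [x [i Di Fix]|x [n _]].
    by exists (choice.pickle i) => //; rewrite /G pickleK_inv asboolT.
  rewrite /G; case: pickle_inv => // i; case: asboolP => // Di Fix.
  by exists i.
apply: nu_bigcupT_le => n; rewrite /G; case: pickle_inv => [i|]; rewrite ?nu0 //.
  by case: (asboolP (D i)) => Di; [exact: mF|].
by case: (asboolP (D i)) => Di; [exact: Fc|rewrite nu0].
Qed.

Definition disjointb (A B : set T) : bool := `[< A `&` B = set0 >].

Definition packing (e : R) (X : set T) (s : seq (set T)) : Prop :=
  {in s, forall A, [/\ measurable A, A `<=` X & e%:E < nu A]} /\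
  pairwise disjointb s.

Lemma packing_sub e X Y s : X `<=` Y -> packing e X s -> packing e Y s.
Proof.
move=> XY [sX ds]; split => // A /sX[mA AX eA].
by split => //; exact: subset_trans XY.
Qed.

Lemma packing_setU e X Y s1 s2 : X `&` Y = set0 ->
  packing e X s1 -> packing e Y s2 -> packing e (X `|` Y) (s1 ++ s2).
Proof.
move=> XY [s1X d1] [s2Y d2]; split.
  move=> A; rewrite mem_cat => /orP[/s1X|/s2Y] [mA AZ eA]; split => //.
    exact: subset_trans AZ (@subsetUl _ X Y).
  exact: subset_trans AZ (@subsetUr _ X Y).
rewrite pairwise_cat d1 d2 !andbT; apply/allrelP => A B As1 Bs2; apply/asboolP.
by have [_ AX _] := s1X _ As1; have [_ BY _] := s2Y _ Bs2; exact: subsetI_eq0 XY.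
Qed.

Lemma packing_split e X C s : measurable C -> packing e X s ->
  exists s1 s2, [/\ packing e (X `&` C) s1, packing e (X `\` C) s2 &
                    size s = (size s1 + size s2)%N].
Proof.
move=> mC [sX ds]; pose inC A := `[< e%:E < nu (A `&` C) >].
exists [seq A `&` C | A <- s & inC A], [seq A `\` C | A <- s & ~~ inC A]; split.
- split; last first.
    rewrite pairwise_map; apply: pairwise_filter; apply: sub_pairwise ds.
    by move=> A B /asboolP AB; apply/asboolP; rewrite setIACA AB set0I.
  move=> B /mapP[A]; rewrite mem_filter => /andP[/asboolP eAC As] ->.
  have [mA AX _] := sX A As.
  by split => //; [exact: measurableI|move=> x [/AX]].
- split; last first.
    rewrite pairwise_map; apply: pairwise_filter; apply: sub_pairwise ds.
    by move=> A B /asboolP AB; apply/asboolP; rewrite !setDE setIACA AB set0I.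
  move=> B /mapP[A]; rewrite mem_filter => /andP[nAC As] ->.
  have [mA AX eA] := sX A As.
  split; [exact: measurableD|by move=> x [/AX]|].
  have : e%:E < maxe (nu (A `&` C)) (nu (A `\` C)).
    by rewrite -nuU ?setUIDK //; [exact: measurableI|exact: measurableD].
  by rewrite lt_max => /orP[eAC|//]; move: nAC; rewrite /inC asboolT.
- by rewrite !size_map !size_filter count_predC.
Qed.

Definition packing_unbounded e X :=
  forall n, exists2 s, packing e X s & (n <= size s)%N.

Lemma packing_unbounded_split e X C : measurable C -> packing_unbounded e X ->
  packing_unbounded e (X `&` C) \/ packing_unbounded e (X `\` C).
Proof.
move=> mC UX; apply: contrapT => /not_orP[/existsNP[n1 UC] /existsNP[n2 UD]].
have [s sX ns] := UX (n1 + n2)%N.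
have [s1 [s2 [s1C s2D ss]]] := packing_split mC sX.
have lt1 : (size s1 < n1)%N.
  by rewrite ltnNge; apply/negP => ?; apply: UC; exists s1.
have lt2 : (size s2 < n2)%N.
  by rewrite ltnNge; apply/negP => ?; apply: UD; exists s2.
lia.
Qed.

Lemma packing_unbounded_step e X : measurable X -> packing_unbounded e X ->
  exists C, [/\ measurable C, C `<=` X, e%:E < nu C &
                packing_unbounded e (X `\` C)].
Proof.
move=> mX UX; have [[|B1 [|B2 s]] [sX ds] //=] := UX 2%N.
have [mB1 B1X eB1] := sX B1 (mem_head _ _).
have B2s : B2 \in [:: B1, B2 & s] by rewrite !inE eqxx orbT.
have [mB2 B2X eB2] := sX B2 B2s.
have /asboolP B12 : disjointb B1 B2 by case/and3P: ds => /andP[].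
have [UI|UD] := packing_unbounded_split mB1 UX; last by exists B1.
exists (X `\` B1); rewrite setDD; split => //; first exact: measurableD.
apply: lt_le_trans eB2 _; apply: le_nu => //; first exact: measurableD.
move=> x B2x; split; first exact: B2X.
by move=> B1x; have : (B1 `&` B2) x by []; rewrite B12.
Qed.

Lemma trivIset_nu_le (e : R) (C : nat -> set T) : (0 < e)%R ->
  (forall n, measurable (C n)) -> trivIset setT C ->
  exists n, nu (C n) <= e%:E.
Proof.
move=> e0 mC tC; apply: contrapT => /forallNP eC.
pose D n := \bigcup_(k in [set k | (n <= k)%N]) C k.
have mD n : measurable (D n) by apply: bigcup_measurable => k _.
have D_dec : {homo D : n m / (n <= m)%N >-> m `<=` n}.
  by move=> n m nm x [k /= mk Ckx]; exists k => //=; exact: leq_trans mk.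
have D0 : \bigcap_n D n = set0.
  apply/seteqP; split => // x Dx.
  have [j _ Cjx] := Dx 0%N I; have [k /= jk Ckx] := Dx j.+1 I.
  by have := @tC _ _ I I (ex_intro _ x (conj Cjx Ckx)); lia.
have := nonincreasing_cvg_nu mD D_dec; rewrite D0 nu0 => /cvge_to_ge D_ge.
suff : e%:E <= 0 by rewrite lee_fin leNgt e0.
apply: D_ge; apply: nearW => n /=; apply: ltW; rewrite ltNge; apply/negP => De.
apply: (eC n); apply: le_trans De; apply: le_nu => // x Cnx.
by exists n => /=.
Qed.

Lemma packing_unbounded_trivIset e X : measurable X -> packing_unbounded e X ->
  exists C : nat -> set T, [/\ forall n, measurable (C n),
    forall n, e%:E < nu (C n) & trivIset setT C].
Proof.
move=> mX UX.
pose step Y C := measurable Y -> packing_unbounded e Y ->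
  [/\ measurable C, C `<=` Y, e%:E < nu C & packing_unbounded e (Y `\` C)].
have [g gP] : {g & forall Y, step Y (g Y)}.
  apply: choice => Y.
  have [[mY UY]|] := pselect (measurable Y /\ packing_unbounded e Y).
    by have [C CP] := packing_unbounded_step mY UY; exists C.
  by move=> /not_andP nY; exists set0 => mY UY; case: nY.
pose fix Y n := if n is n'.+1 then Y n' `\` g (Y n') else X.
have YP n : measurable (Y n) /\ packing_unbounded e (Y n).
  elim: n => [//|n [mY UY]] /=.
  by have [mg _ _ Ug] := gP _ mY UY; split => //; exact: measurableD.
have Y_dec n m : (n < m)%N -> Y m `<=` Y n `\` g (Y n).
  elim: m => [//|m ih]; rewrite ltnS leq_eqVlt => /orP[/eqP->//|nm] /= x [].
  by move=> /(ih nm).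
exists (g \o Y); split => [n|n|].
- by case: (YP n) => mY UY; case: (gP _ mY UY).
- by case: (YP n) => mY UY; case: (gP _ mY UY).
- move=> n m _ _ [x [gn gm]]; case: (ltngtP n m) => // lt.
    have [mY UY] := YP m; have [_ gY _ _] := gP _ mY UY.
    by have [_] := Y_dec _ _ lt x (gY x gm).
  have [mY UY] := YP n; have [_ gY _ _] := gP _ mY UY.
  by have [_] := Y_dec _ _ lt x (gY x gn).
Qed.

Lemma packing_bounded e : (0 < e)%R ->
  exists M, forall s, packing e setT s -> (size s <= M)%N.
Proof.
move=> e0; apply: contrapT => /forallNP noM.
have UT : packing_unbounded e setT.
  move=> n; have /existsNP[s /not_implyP[sT ns]] := noM n.
  by exists s => //; rewrite leqNgt; apply/negP => /ltnW.
have [C [mC eC tC]] := packing_unbounded_trivIset measurableT UT.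
have [n Cn] := trivIset_nu_le e0 mC tC.
by move: (eC n); rewrite ltNge Cn.
Qed.

Definition eps (k : nat) : R := k.+1%:R^-1.

Lemma eps_gt0 k : (0 < eps k)%R. Proof. by rewrite invr_gt0 ltr0n. Qed.

Lemma lt_eps x : 0 < x -> exists k, (eps k)%:E < x.
Proof.
case: x => [r|_|//]; last by exists 0%N; rewrite ltry.
rewrite !lte_fin => r0; exists (Num.truncn r^-1).
have r1_ge0 : (0 <= r^-1)%R by rewrite invr_ge0 ltW.
rewrite lte_fin /eps invf_plt ?posrE ?ltr0n ?invr_gt0 //.
by case/andP: (truncn_itv r1_ge0).
Qed.

Lemma gt_eps t y : t%:E < y <-> exists n, (t + eps n)%:E <= y.
Proof.
split => [|[n]]; last by apply: lt_le_trans; rewrite lte_fin ltrDl eps_gt0.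
case: y => [r|_|//]; last by exists 0%N; rewrite leey.
rewrite lte_fin -subr_gt0 => tr; have [n] := @lt_eps (r - t)%:E tr.
by rewrite lte_fin => en; exists n; rewrite lee_fin -lerBrDl ltW.
Qed.

Definition packing_bound k : nat :=
  projT1 (cid (packing_bounded (eps_gt0 k))).

Lemma packing_boundP k X s : packing (eps k) X s ->
  (size s <= packing_bound k)%N.
Proof.
rewrite /packing_bound; case: cid => M /= MP.
by move=> /(packing_sub (@subsetT _ X)) /MP.
Qed.

Definition packing_sizes k X : pred nat :=
  fun n => `[< exists2 s, packing (eps k) X s & size s = n >].

Lemma packing_sizes0 k X : exists n, packing_sizes k X n.
Proof. by exists 0%N; apply/asboolP; exists [::]. Qed.

Lemma packing_sizes_ub k X n : packing_sizes k X n -> (n <= packing_bound k)%N.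
Proof. by move=> /asboolP[s sX <-]; exact: packing_boundP sX. Qed.

Definition packing_number k X : nat :=
  ex_maxn (packing_sizes0 k X) (@packing_sizes_ub k X).

Lemma packing_number_max k X s : packing (eps k) X s ->
  (size s <= packing_number k X)%N.
Proof.
move=> sX; rewrite /packing_number; case: ex_maxnP => n _; apply.
by apply/asboolP; exists s.
Qed.

Lemma packing_numberP k X :
  exists2 s, packing (eps k) X s & size s = packing_number k X.
Proof. by rewrite /packing_number; case: ex_maxnP => n /asboolP. Qed.

Lemma packing_number_le_bound k X : (packing_number k X <= packing_bound k)%N.
Proof. by have [s /packing_boundP + <-] := packing_numberP k X. Qed.

Lemma le_packing_number k X Y : X `<=` Y ->
  (packing_number k X <= packing_number k Y)%N.
Proof.
move=> XY; have [s sX <-] := packing_numberP k X.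
exact/packing_number_max/(packing_sub XY).
Qed.

Lemma packing_numberU k X Y : measurable X -> X `&` Y = set0 ->
  packing_number k (X `|` Y) = (packing_number k X + packing_number k Y)%N.
Proof.
move=> mX XY; apply/eqP; rewrite eqn_leq; apply/andP; split.
  have [s sXY <-] := packing_numberP k (X `|` Y).
  have [s1 [s2 [s1X s2Y ->]]] := packing_split mX sXY.
  rewrite leq_add // packing_number_max //.
    by apply: packing_sub s1X => x [].
  by apply: packing_sub s2Y => x [[]].
have [s1 s1X <-] := packing_numberP k X; have [s2 s2Y <-] := packing_numberP k Y.
by rewrite -size_cat; apply/packing_number_max/packing_setU.
Qed.

Lemma packing_number_gt0 k X : measurable X -> (eps k)%:E < nu X ->
  (0 < packing_number k X)%N.
Proof.
move=> mX eX; apply: (@packing_number_max k X [:: X]); split => //.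
by move=> A; rewrite inE => /eqP->; split.
Qed.

Lemma packing_number_eq0 k X : measurable X -> nu X = 0 ->
  packing_number k X = 0%N.
Proof.
move=> mX X0; have [[|A s] [sX _] <-] // := packing_numberP k X.
have [mA AX eA] := sX A (mem_head _ _).
have : (eps k)%:E < 0 by rewrite -X0 (lt_le_trans eA) // le_nu.
by rewrite lte_fin ltNge (ltW (eps_gt0 k)).
Qed.

Lemma cvg_ex_gt (u : nat -> \bar R) l c : u @ \oo --> l -> c < l ->
  exists n, c < u n.
Proof.
move=> ul cl; apply: contrapT => /forallNP uc.
have : l <= c.
  by apply: (cvge_to_le ul); apply: nearW => n; rewrite leNgt; exact/negP.
by rewrite leNgt cl.
Qed.

Lemma packing_setI_eventually e X (H : nat -> set T) s :
  (forall n, measurable (H n)) -> {homo H : n m / (n <= m)%N >-> n `<=` m} ->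
  \bigcup_n H n = X -> packing e X s ->
  exists n0, forall n, (n0 <= n)%N -> packing e (H n) [seq A `&` H n | A <- s].
Proof.
move=> mH ndH UH [sX ds].
have [n0 n0P] : exists n0, forall n, (n0 <= n)%N ->
    {in s, forall A, e%:E < nu (A `&` H n)}.
  elim: s {ds} sX => [|A s ih] sX; first by exists 0%N.
  have [n1 n1P] : exists n1, forall n, (n1 <= n)%N ->
      {in s, forall B, e%:E < nu (B `&` H n)}.
    by apply: ih => B Bs; apply: sX; rewrite in_cons Bs orbT.
  have [mA AX eA] := sX A (mem_head _ _).
  have mAH n : measurable (A `&` H n) by exact: measurableI.
  have AH_cvg : (nu \o (fun n => A `&` H n)) @ \oo --> nu A.
    rewrite -[in nu A](setIidl AX) -UH setI_bigcupr.
    by apply: nondecreasing_cvg_nu => // n m nm; apply: setIS; exact: ndH.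
  have [n2 eAH] := cvg_ex_gt AH_cvg eA.
  exists (maxn n1 n2) => n; rewrite geq_max => /andP[n1n n2n] B.
  rewrite in_cons => /orP[/eqP->|]; last exact: n1P.
  apply: lt_le_trans eAH _; apply: le_nu => //; apply: setIS; exact: ndH.
exists n0 => n n0n; split => [B /mapP[A As ->]|]; last first.
  rewrite pairwise_map; apply: sub_pairwise ds => A B /asboolP AB.
  by apply/asboolP; rewrite setIACA AB set0I.
have [mA _ _] := sX _ As.
by split; [exact: measurableI|exact: subIsetr|exact: n0P].
Qed.

Section packing_number_sigma_additive.
Variable F : nat -> set T.
Hypotheses (mF : forall n, measurable (F n)) (tF : trivIset setT F).

Let G n := \big[setU/set0]_(i < n) F i.

Let mG n : measurable (G n). Proof. exact: bigsetU_measurable. Qed.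

Lemma packing_number_bigsetU k n :
  packing_number k (G n) = (\sum_(i < n) packing_number k (F i))%N.
Proof.
elim: n => [|n ih].
  by rewrite /G !big_ord0; apply: packing_number_eq0 => //; exact: nu0.
rewrite /G !big_ord_recr /= packing_numberU //= -/(G n) ?ih //.
apply/seteqP; split => // x [Gnx Fnx]; move: Gnx; rewrite /G -bigcup_mkord.
move=> [i /= ilt Fix].
by have := @tF _ _ I I (ex_intro _ x (conj Fix Fnx)); lia.
Qed.

Lemma packing_number_bigcup k : exists n0, forall n, (n0 <= n)%N ->
  packing_number k (G n) = packing_number k (\bigcup_n F n).
Proof.
have [s sU sN] := packing_numberP k (\bigcup_n F n).
have G_nd : {homo G : n m / (n <= m)%N >-> n `<=` m}.
  move=> n m nm; rewrite /G -!bigcup_mkord => x [i /= im Fix].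
  by exists i => //=; exact: leq_trans nm.
have UG : \bigcup_n G n = \bigcup_n F n.
  apply/seteqP; split=> x [n _]; first exact: bigsetU_bigcup.
  by move=> Fnx; exists n.+1 => //; exact: (bigsetU_sup (ltnSn n)).
have [n0 n0P] := packing_setI_eventually mG G_nd UG sU.
exists n0 => n n0n; apply/eqP; rewrite eqn_leq le_packing_number; last first.
  exact: bigsetU_bigcup.
by rewrite -sN -(size_map (fun A => A `&` G n)); exact/packing_number_max/n0P.
Qed.

End packing_number_sigma_additive.

Definition packing_measure k (X : set T) : \bar R :=
  ((packing_number k X)%:R / ((packing_number k setT).+1 * 2 ^ (k + 1))%:R)%:E.

Section packing_measure_measure.
Variable k : nat.

Let packing_measure0 : packing_measure k set0 = 0.
Proof. by rewrite /packing_measure packing_number_eq0 ?nu0 // mul0r. Qed.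

Let packing_measure_ge0 X : 0 <= packing_measure k X.
Proof. by rewrite lee_fin divr_ge0. Qed.

Let packing_measure_sigma_additive : semi_sigma_additive (packing_measure k).
Proof.
move=> F mF tF _; have [n0 n0P] := packing_number_bigcup mF k.
apply: cvg_near_cst; exists n0 => // n /= n0n.
by rewrite /packing_measure -(n0P n n0n) packing_number_bigsetU // sumEFin
  big_mkord natr_sum mulr_suml.
Qed.

HB.instance Definition _ := isMeasure.Build _ _ _ (packing_measure k)
  packing_measure0 packing_measure_ge0 packing_measure_sigma_additive.

End packing_measure_measure.

Definition packing_series :=
  mseries (fun k => packing_measure k : {measure set T -> \bar R}) 0.

Lemma packing_series_fin : packing_series setT < +oo.
Proof.
apply: (@le_lt_trans _ _ 1); last exact: ltry.
have := @cvg_geometric_eseries_half R 1%R 0; rewrite expr0 divr1 => geo.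
rewrite -(cvg_lim _ geo) //; apply: lee_nneseries => [k _ _|k _].
  exact: measure_ge0.
rewrite /= /packing_measure lee_fin natrM invfM mulrA.
rewrite ler_pM2r ?invr_gt0 ?ltr0n ?expn_gt0 //.
by rewrite ler_pdivrMr ?ltr0n // mul1r ler_nat leqW // le_packing_number.
Qed.

Lemma packing_series_gt0 B : measurable B ->
  (0 < nu B <-> 0 < packing_series B).
Proof.
move=> mB; split => [/lt_eps[k eB]|].
  apply: (@lt_le_trans _ _ (packing_measure k B)).
    by rewrite lte_fin divr_gt0 // ltr0n packing_number_gt0.
  apply: le_trans (nneseries_lim_ge k.+1 _) => [|n _ _]; last exact: measure_ge0.
  by rewrite big_nat_recr //= leeDr // sume_ge0 // => n _; exact: measure_ge0.
apply: contraPP => /negP; rewrite -leNgt => nuB_le0.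
have B0 : nu B = 0 by apply/eqP; rewrite eq_le nuB_le0 nu_ge0.
rewrite /packing_series /mseries eseries0 ?ltxx // => k _ _.
by rewrite /= /packing_measure packing_number_eq0 // mul0r.
Qed.

Lemma optimal_measure_essential : essential nu.
Proof.
exists packing_series; split; last exact: packing_series_gt0.
exists (fun=> setT); first by rewrite bigcup_const.
by move=> _; split => //; exact: packing_series_fin.
Qed.

Lemma packing_number_argmax (I : set (set T)) k : I !=set0 ->
  exists2 S, I S &
    forall S', I S' -> (packing_number k S' <= packing_number k S)%N.
Proof.
move=> [S0 IS0].
pose P : pred nat :=
  fun n => `[< exists2 S, I S & (n <= packing_number k S)%N >].
have P0 : exists n, P n by exists 0%N; apply/asboolP; exists S0.
have P_ub n : P n -> (n <= packing_bound k)%N.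
  by move=> /asboolP[S _ nS]; exact: leq_trans nS (packing_number_le_bound k S).
case: (ex_maxnP P0 P_ub) => n /asboolP[S IS nS] n_max.
exists S => // S' IS'; apply: leq_trans nS; apply: n_max.
by apply/asboolP; exists S'.
Qed.

(* A countable union of maximisers for every level k is a principal element:
   anything left outside it would raise some packing number. *)
Lemma optimal_measure_sigma_principal : sigma_principal nu.
Proof.
move=> I [I0 Im IU Isub].
pose argmax k S := I S /\
  forall S', I S' -> (packing_number k S' <= packing_number k S)%N.
have [S SP] : {S & forall k, argmax k (S k)}.
  apply: choice => k.
  by have [S IS Smax] := packing_number_argmax k I0; exists S.
pose L := \bigcup_k S k; have IL : I L by apply: IU => k; case: (SP k).
exists L => // S' IS'.
have mSL : measurable (S' `\` L) by apply: measurableD; exact: Im.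
apply/(nu_negligibleE mSL); apply/eqP; rewrite eq_le nu_ge0 // andbT leNgt.
apply/negP => /lt_eps[k eSL].
have ILS : I (L `|` S').
  rewrite -bigcup2E; apply: IU => -[|[|n]] //=.
  by case: I0 => S0 IS0; apply: Isub IS0 measurable0 (sub0set _).
have := (SP k).2 _ ILS.
rewrite -(setDUK (@subsetUl _ L S')) setDUD setDv set0U.
rewrite packing_numberU ?setDIK //; last exact: Im.
have := packing_number_gt0 mSL eSL.
have : (packing_number k (S k) <= packing_number k L)%N.
  by apply: le_packing_number => x Skx; exists k.
lia.
Qed.

Lemma disjoint_family_finite k (F : set (set T)) :
  (forall A, F A -> measurable A /\ (eps k)%:E < nu A) ->
  (forall A B, F A -> F B -> A <> B -> A `&` B = set0) -> finite_set F.
Proof.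
move=> FP Fd; apply: contrapT => /(infinite_set_fset (packing_bound k).+1)[B BF].
apply/negP; rewrite -leqNgt; apply: (@packing_boundP k setT).
split => [A /BF /FP[]//|].
apply: (@sub_in_pairwise _ (mem (enum_fset B)) [rel x y | x != y]).
- move=> A A' A_B A'_B /eqP AA'; apply/asboolP.
  by apply: Fd AA'; apply: BF.
- exact/allP.
- by rewrite -uniq_pairwise fset_uniq.
Qed.

Lemma optimal_measure_CCC : CCC nu.
Proof.
move=> F Fm Fn Fd; pose Fk k := [set A | F A /\ (eps k)%:E < nu A].
have FFk : F `<=` \bigcup_k Fk k.
  move=> A FA; have mA := Fm _ FA; suff /lt_eps[k eA] : 0 < nu A by exists k.
  rewrite lt_neqAle nu_ge0 // andbT eq_sym; apply/eqP => A0.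
  by apply: (Fn _ FA); apply/(nu_negligibleE mA).
apply: sub_countable (subset_card_le FFk) _.
apply: bigcup_countable => [|k _]; first exact: countableP.
apply/finite_set_countable/(@disjoint_family_finite k).
  by move=> A [FA eA]; split => //; exact: Fm.
by move=> A B [FA _] [FB _]; exact: Fd.
Qed.

Lemma nu_sublevel_principal t : (0 <= t)%R -> exists W, [/\ measurable W,
  nu W <= t%:E & forall S, measurable S -> nu S <= t%:E -> nu (S `\` W) = 0].
Proof.
move=> t0; pose I := [set G | measurable G /\ nu G <= t%:E].
have [|L [mL Lt] LP] := @optimal_measure_sigma_principal I.
  split => [|G []//|F FI|A B [mA At] mB BA].
  - by exists set0; split => //; rewrite nu0 lee_fin.
  - split; first by apply: bigcupT_measurable => n; case: (FI n).
    by apply: nu_bigcupT_le => n; case: (FI n).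
  - by split => //; apply: le_trans At; exact: le_nu.
exists L; split => // S mS St.
by apply/nu_negligibleE; [exact: measurableD|exact: LP].
Qed.

Section sublevel_density.
Variable W : rat -> set T.
Hypothesis mW : forall q, measurable (W q).
Hypothesis nuW : forall q, (0 < q)%R -> nu (W q) <= (ratr q)%:E.
Hypothesis W_principal : forall q, (0 < q)%R ->
  forall S, measurable S -> nu S <= (ratr q)%:E -> nu (S `\` W q) = 0.

Let f x : \bar R :=
  ereal_inf [set (ratr q)%:E | q in [set q | (0 < q)%R /\ W q x]].

Let f_ge0 x : 0 <= f x.
Proof. by apply/ereal_infP => _ [q [q0 _] <-]; rewrite lee_fin ler0q ltW. Qed.

Let f_ltE s : [set x | f x < s%:E] =
  \bigcup_(q in [set q | (0 < q)%R /\ (ratr q < s)%R]) W q.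
Proof.
apply/seteqP; split => [x /ereal_inf_lt[_ [q [q0 Wqx] <-]]|x [q [q0 qs] Wqx]].
  by rewrite lte_fin => qs; exists q.
apply: le_lt_trans (_ : (ratr q)%:E < s%:E); last by rewrite lte_fin.
by apply: ereal_inf_lbound; exists q.
Qed.

Let measurable_f_lt s : measurable [set x | f x < s%:E].
Proof.
rewrite f_ltE bigcup_mkcond; apply: bigcupT_measurable_rat => q.
by case: ifP.
Qed.

Let nu_f_lt s : (0 <= s)%R -> nu [set x | f x < s%:E] <= s%:E.
Proof.
move=> s0; rewrite f_ltE; apply: nu_bigcup_le => [|q _|q [q0 qs]].
- by rewrite lee_fin.
- exact: mW.
- by apply: le_trans (nuW q0) _; rewrite lee_fin ltW.
Qed.

Let measurable_f_gt t : measurable [set x | t%:E < f x].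
Proof.
have -> : [set x | t%:E < f x] = \bigcup_n ~` [set x | f x < (t + eps n)%:E].
  apply/seteqP; split => x /=.
    by move=> /gt_eps[n tfx]; exists n => //=; apply/negP; rewrite -leNgt.
  by move=> [n _ /negP]; rewrite -leNgt => tfx; apply/gt_eps; exists n.
by apply: bigcupT_measurable => n; apply: measurableC.
Qed.

Let f_gt_negligible B t : measurable B -> nu B < t%:E ->
  nu_negligible nu (B `&` [set x | t%:E < f x]).
Proof.
move=> mB; have := nu_ge0 mB; case Br: (nu B) => [r| |] //.
rewrite lee_fin lte_fin => r0 rt; have /rat_in_itvoo[q] := rt.
rewrite in_itv /= => /andP[rq qt].
have q0 : (0 < q)%R by rewrite -(ltr0q R) (le_lt_trans r0).
exists (B `\` W q); split; first exact: measurableD.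
  move=> x [Bx /= tfx]; split => // Wqx.
  move: tfx; rewrite ltNge => /negP; apply.
  have : f x <= (ratr q)%:E by apply: ereal_inf_lbound; exists q.
  by move/le_trans; apply; rewrite lee_fin ltW.
by apply: W_principal => //; rewrite Br lee_fin ltW.
Qed.

Let f_gt_not_negligible B t : measurable B -> (0 < t)%R -> t%:E < nu B ->
  ~ nu_negligible nu (B `&` [set x | t%:E < f x]).
Proof.
move=> mB t0 tB [G [mG BG G0]].
have [t' [tt' t'B]] : exists t', (t < t')%R /\ t'%:E < nu B.
  move: tB; case: (nu B) => [r|_|//]; last first.
    by exists (t + 1)%R; rewrite ltrDl ltry.
  rewrite lte_fin => /midf_lt[tm mr].
  by exists ((t + r) / 2)%R; rewrite lte_fin.
pose S := [set x | f x < t'%:E]; have mS : measurable S := measurable_f_lt t'.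
have BS0 : nu (B `\` S) = 0.
  apply/eqP; rewrite eq_le nu_ge0 ?andbT; last exact: measurableD.
  rewrite -G0 le_nu //; first exact: measurableD.
  move=> x [Bx Sx]; apply: BG; split => //=.
  by apply: (@lt_le_trans _ _ t'%:E); rewrite ?lte_fin // leNgt; apply/negP.
have : maxe (nu (B `&` S)) (nu (B `\` S)) < nu B.
  have B_gt0 : 0 < nu B by apply: lt_trans tB; rewrite lte_fin.
  rewrite gt_max BS0 B_gt0 andbT.
  apply: le_lt_trans t'B; apply: le_trans (nu_f_lt _); last first.
    by rewrite ltW // (lt_trans t0).
  by apply: le_nu; [exact: measurableI|exact: mS|exact: subIsetr].
by rewrite -nuU ?setUIDK ?ltxx //; [exact: measurableI|exact: measurableD].
Qed.

Lemma sublevel_density_autocontinuous : autocontinuous nu.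
Proof.
exists f; split => [x|t t0|B mB]; [exact: f_ge0|exact: measurable_f_gt|].
apply/eqP; rewrite eq_le; apply/andP; split.
  apply/ereal_infP => _ [t [t0 Bt] <-]; rewrite leNgt; apply/negP => tB.
  exact: f_gt_not_negligible tB Bt.
have := nu_ge0 mB; case Br: (nu B) => [r| |] //; rewrite ?leey //.
rewrite lee_fin => r0.
apply/lee_addgt0Pr => e e0; apply: ge_ereal_inf; exists (r + e)%:E => //.
exists (r + e)%R => //; split; first by rewrite ltr_wpDl.
by apply: f_gt_negligible => //; rewrite Br lte_fin ltrDl.
Qed.

End sublevel_density.

Lemma optimal_measure_autocontinuous : autocontinuous nu.
Proof.
pose principal q W := measurable W /\ ((0 < q)%R -> nu W <= (ratr q)%:E /\
  forall S, measurable S -> nu S <= (ratr q)%:E -> nu (S `\` W) = 0).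
have [W WP] : {W & forall q, principal q (W q)}.
  apply: choice => q; case: (ltrP 0 q) => [q0|q_le0]; last first.
    by exists set0; split => // q0; move: q_le0; rewrite leNgt q0.
  have [|W [mW nuW W_max]] := @nu_sublevel_principal (ratr q).
    by rewrite ler0q ltW.
  by exists W.
apply: (@sublevel_density_autocontinuous W) => [q|q q0|q q0].
- by case: (WP q).
- by case: (WP q) => _ /(_ q0)[].
- by case: (WP q) => _ /(_ q0)[].
Qed.

End optimal_measure.

Unset Implicit Arguments.
Local Close Scope ereal_scope.
Local Close Scope ring_scope.

Theorem proposition6p6 (d : measure_display) (T : measurableType d)
  (R : realType) (hE : [set: T] !=set0) (nu : set T -> \bar R) :
  optimal_measure nu ->
  [/\ essential nu, sigma_principal nu, CCC nu & autocontinuous nu].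
Proof.
move=> nu_opt; split.
- exact: optimal_measure_essential.
- exact: optimal_measure_sigma_principal.
- exact: optimal_measure_CCC.
- exact: optimal_measure_autocontinuous.
Qed.
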